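(* Let $\mathfrak e$ be an edge, $p\in\mathbb N$, $\tau_{\mathfrak e}>0$, let boundary data $\bar{\vec u}_{\mathfrak n},\bar{\vec r}_{\mathfrak n}\in\mathbb R^3$ be given for the two endpoints $\mathfrak n$ of $\mathfrak e$, and let $\vec f_{\mathfrak e},\vec g_{\mathfrak e}\in(L^2(\mathfrak e))^3$. Then there is a unique quadruple $\bar{\vec u}_{\mathfrak e},\bar{\vec r}_{\mathfrak e},\bar{\vec n}_{\mathfrak e},\bar{\vec m}_{\mathfrak e}\in V_p^{\mathfrak e}$ such that for all $\bar{\vec p},\bar{\vec q},\bar{\vec v},\bar{\vec w}\in V_p^{\mathfrak e}$: \begin{align*} -(C_{\vec n}^{-1}\bar{\vec n}_{\mathfrak e},\bar{\vec p})_{\mathfrak e}+(\bar{\vec u}_{\mathfrak e},\partial_x\bar{\vec p})_{\mathfrak e}-(\vec i_{\mathfrak e}\times\bar{\vec r}_{\mathfrak e},\bar{\vec p})_{\mathfrak e}&=\langle\bar{\vec u}_{\mathfrak n},\bar{\vec p}\,\nu_{\mathfrak e}\rangle_{\mathfrak e},\\ -(C_{\vec m}^{-1}\bar{\vec m}_{\mathfrak e},\bar{\vec q})_{\mathfrak e}+(\bar{\vec r}_{\mathfrak e},\partial_x\bar{\vec q})_{\mathfrak e}&=\langle\bar{\vec r}_{\mathfrak n},\bar{\vec q}\,\nu_{\mathfrak e}\rangle_{\mathfrak e},\\ (\partial_x\bar{\vec n}_{\mathfrak e},\bar{\vec v})_{\mathfrak e}+\tau_{\mathfrak e}\langle\bar{\vec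 u}_{\mathfrak e},\bar{\vec v}\rangle_{\mathfrak e}&=(\vec f_{\mathfrak e},\bar{\vec v})_{\mathfrak e}+\tau_{\mathfrak e}\langle\bar{\vec u}_{\mathfrak n},\bar{\vec v}\rangle_{\mathfrak e},\\ (\vec i_{\mathfrak e}\times\bar{\vec n}_{\mathfrak e},\bar{\vec w})_{\mathfrak e}+(\partial_x\bar{\vec m}_{\mathfrak e},\bar{\vec w})_{\mathfrak e}+\tau_{\mathfrak e}\langle\bar{\vec r}_{\mathfrak e},\bar{\vec w}\rangle_{\mathfrak e}&=(\vec g_{\mathfrak e},\bar{\vec w})_{\mathfrak e}+\tau_{\mathfrak e}\langle\bar{\vec r}_{\mathfrak n},\bar{\vec w}\rangle_{\mathfrak e}. \end{align*}
   Context: An edge $\mathfrak e$ is the straight segment in $\mathbb R^3$ joining two distinct nodes $\mathfrak n_k,\mathfrak n_\ell$ ($k<\ell$), of length $h_{\mathfrak e}=|\mathfrak n_\ell-\mathfrak n_k|$, direction $\vec i_{\mathfrak e}=(\mathfrak n_\ell-\mathfrak n_k)/h_{\mathfrak e}$, scalar normals $\nu_{\mathfrak e}(\mathfrak n_k)=-1$, $\nu_{\mathfrak e}(\mathfrak n_\ell)=+1$. $x$ is the arclength coordinate on $\mathfrak e$ increasing in direction $\vec i_{\mathfrak e}$, $\partial_x$ its derivative, $\times$ the cross product. $C_{\vec n},C_{\vec m}$ are symmetric $\mathbb R^{3\times3}$-valued functions on $\mathfrak e$ satisfying $\alpha_{\vec n}|\xi|^2\le (C_{\vec n}(x)\xi)\cdot\xi\le\beta_{\vec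 n}|\xi|^2$, $\alpha_{\vec m}|\xi|^2\le (C_{\vec m}(x)\xi)\cdot\xi\le\beta_{\vec m}|\xi|^2$ for all $\xi\in\mathbb R^3$, $x\in\mathfrak e$, with constants $0<\alpha_{\cdot},\beta_{\cdot}<\infty$. $\mathds P_p(\mathfrak e)$ is the space of polynomials on $\mathfrak e$ of degree at most $p$ and $V_p^{\mathfrak e}=(\mathds P_p(\mathfrak e))^3$. Notation: $(\vec v,\vec w)_{\mathfrak e}=\int_{\mathfrak e}\vec v\cdot\vec w\,\mathrm d\sigma$; $\langle\vec a,\vec b\rangle_{\mathfrak e}=\sum_{\mathfrak n\text{ endpoint of }\mathfrak e}\vec a(\mathfrak n)\cdot\vec b(\mathfrak n)$, also applied to quantities only defined at endpoints (e.g. $\langle\bar{\vec u}_{\mathfrak n},\bar{\vec p}\,\nu_{\mathfrak e}\rangle_{\mathfrak e}=\sum_{\mathfrak n}\bar{\vec u}_{\mathfrak n}\cdot\bar{\vec p}(\mathfrak n)\nu_{\mathfrak e}(\mathfrak n)$). *)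

From HB Require Import structures.
From mathcomp Require Import all_boot all_order all_algebra.
From mathcomp Require Import all_classical all_reals all_analysis.
Set Implicit Arguments. Unset Strict Implicit. Unset Printing Implicit Defensive.
Import Order.TTheory GRing.Theory Num.Theory.
Import numFieldNormedType.Exports.
Local Open Scope classical_set_scope.
Local Open Scope ring_scope.

Notation polyvec R := (@matrix {poly R} 3 1) (only parsing).

Section Defs.
Variable R : realType.

Definition dot3 (a b : 'cV[R]_3) : R := \sum_i a i ord0 * b i ord0.

Definition c0 : 'I_3 := inord 0.
Definition c1 : 'I_3 := inord 1.
Definition c2 : 'I_3 := inord 2.

Definition cross3 (a b : 'cV[R]_3) : 'cV[R]_3 :=
  \col_(i < 3)
    (if nat_of_ord i == 0%N then a c1 ord0 * b c2 ord0 - a c2 ord0 * b c1 ord0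
     else if nat_of_ord i == 1%N then a c2 ord0 * b c0 ord0 - a c0 ord0 * b c2 ord0
     else a c0 ord0 * b c1 ord0 - a c1 ord0 * b c0 ord0).

Definition norm3 (a : 'cV[R]_3) : R := Num.sqrt (dot3 a a).

Definition in_Vp (p : nat) (P : polyvec R) : Prop := forall i, (size (P i ord0) <= p.+1)%N.

Definition evalv (P : polyvec R) (x : R) : 'cV[R]_3 := \col_i (P i ord0).[x].
Definition derivv (P : polyvec R) : polyvec R := \col_i (P i ord0)^`().

(* (F, G)_e over the edge parametrized by arclength x in [0, h] *)
Definition ip_e (h : R) (F G : R -> 'cV[R]_3) : R :=
  Rintegral lebesgue_measure `[0, h] (fun x => dot3 (F x) (G x)).

(* <a, b>_e : sum over the two endpoints x = 0 (node n_k) and x = h (node n_l) *)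
Definition bd_e (h : R) (F G : R -> 'cV[R]_3) : R :=
  dot3 (F 0) (G 0) + dot3 (F h) (G h).

End Defs.

From HB Require Import structures.
From mathcomp Require Import all_boot all_order all_algebra.
From mathcomp Require Import all_classical all_reals all_analysis.
From mathcomp Require Import ring lra.
Import Order.TTheory GRing.Theory Num.Theory.
Import numFieldNormedType.Exports.
Local Open Scope classical_set_scope.
Local Open Scope ring_scope.
Set Implicit Arguments. Unset Strict Implicit. Unset Printing Implicit Defensive.

(* The four equations form a square linear system on the finite-dimensional
   space V_p^4, so it is uniquely solvable as soon as its homogeneous version
   has only the trivial solution.  For a homogeneous solution (u, r, n, m), test
   the two constitutive equations with n and m and the two balance equations
   with u and r: the coupling terms cancel, leaving
     (C_n^-1 n, n) + (C_m^-1 m, m) + tau (<u, u> + <r, r>) = 0.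
   Coercivity gives n = m = 0 and u, r vanish at both ends of the edge.  The
   remaining equations then say (r, q') = (u, p') = 0 for all test functions;
   testing with q = r', p = u' and integrating by parts gives r' = u' = 0,
   hence r = u = 0. *)

Section BoundedMeasurable.
Variables (R : realType) (D : set R).
Local Notation mu := (@lebesgue_measure R).

Definition bounded_measurable (F : R -> R) :=
  measurable_fun D F /\ exists M, forall x, D x -> `|F x| <= M.

Lemma bounded_measurable_cst c : bounded_measurable (fun=> c).
Proof. by split; [exact: measurable_cst | exists `|c|]. Qed.

Lemma bounded_measurableD F G : bounded_measurable F -> bounded_measurable G ->
  bounded_measurable (fun x => F x + G x).
Proof.
move=> [mF [M FM]] [mG [N GN]]; split; first exact: measurable_realfun.measurable_funD.
by exists (M + N) => x Dx; rewrite (le_trans (ler_normD _ _)) ?lerD ?FM ?GN.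
Qed.

Lemma bounded_measurableN F : bounded_measurable F ->
  bounded_measurable (fun x => - F x).
Proof.
move=> [mF [M FM]]; split; first exact: measurableT_comp.
by exists M => x Dx; rewrite normrN FM.
Qed.

Lemma bounded_measurableM F G : bounded_measurable F -> bounded_measurable G ->
  bounded_measurable (fun x => F x * G x).
Proof.
move=> [mF [M FM]] [mG [N GN]]; split; first exact: measurable_realfun.measurable_funM.
by exists (M * N) => x Dx; rewrite normrM ler_pM ?FM ?GN.
Qed.

Lemma bounded_measurable_sum (I : Type) (r : seq I) (F : I -> R -> R) :
  (forall i, bounded_measurable (F i)) ->
  bounded_measurable (fun x => \sum_(i <- r) F i x).
Proof.
move=> bF; elim: r => [|i r IH].
  by under eq_fun do rewrite big_nil; exact: bounded_measurable_cst.
by under eq_fun do rewrite big_cons; exact: bounded_measurableD.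
Qed.

Lemma bounded_measurable_horner (P : {poly R}) :
  (exists M, forall x, D x -> `|x| <= M) -> bounded_measurable (horner P).
Proof.
move=> [M DM]; have bid : bounded_measurable id.
  by split; [exact: measurable_id | exists M].
elim/poly_ind: P => [|P c IH].
  by rewrite horner0_ext; exact: bounded_measurable_cst.
have -> : horner (P * 'X + c%:P) = (fun x => P.[x] * id x + c).
  by apply/funext => x; rewrite hornerMXaddC.
exact/bounded_measurableD/bounded_measurable_cst/bounded_measurableM.
Qed.

Hypothesis mD : measurable D.

Hypothesis finD : (mu D < +oo)%E.

Lemma bounded_measurable_integrable F :
  bounded_measurable F -> mu.-integrable D (EFin \o F).
Proof.
move=> [mF [M FM]]; apply: measurable_bounded_integrable => //.
exists M; split; first exact: num_real.
by move=> y My x Dx; apply: le_trans (FM x Dx) _; exact: ltW.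
Qed.

Lemma integrable_mul_bounded (f G : R -> R) : measurable_fun D f ->
  mu.-integrable D (fun x => (f x ^+ 2)%:E) -> bounded_measurable G ->
  mu.-integrable D (EFin \o (fun x => f x * G x)).
Proof.
move=> mf if2 [mG [M GM]].
have i1 := bounded_measurable_integrable (bounded_measurable_cst 1).
have := @integrableZl _ _ R mu D mD (`|M| + 1) _ (@integrableD _ _ R mu D mD _ _ i1 if2).
apply: (@le_integrable _ _ R mu D mD).
  exact/measurable_realfun.measurable_EFinP/measurable_realfun.measurable_funM.
move=> x Dx /=; rewrite lee_fin normrM [`|_ * (1 + _)|]ger0_norm; last first.
  by apply: mulr_ge0; rewrite addr_ge0 ?sqr_ge0.
have fx : `|f x| <= 1 + f x ^+ 2 by rewrite -real_normK ?num_real //; nra.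
have Gx : `|G x| <= `|M| + 1.
  by rewrite (le_trans (GM x Dx)) // (le_trans (ler_norm M)) ?lerDl.
by rewrite mulrC ler_pM.
Qed.

End BoundedMeasurable.

Section Dot3.
Variable R : realType.
Implicit Types (a b c v : 'cV[R]_3).

Lemma sum3 (V : nmodType) (F : 'I_3 -> V) : \sum_i F i = F c0 + F c1 + F c2.
Proof.
rewrite !big_ord_recl big_ord0 addr0 addrA.
by congr (F _ + F _ + F _); apply: val_inj; rewrite /= inordK.
Qed.

Lemma dot3C a b : dot3 a b = dot3 b a.
Proof. by apply: eq_bigr => i _; rewrite mulrC. Qed.

Lemma dot3Dl a b c : dot3 (a + b) c = dot3 a c + dot3 b c.
Proof. by rewrite /dot3 -big_split; apply: eq_bigr => i _; rewrite !mxE mulrDl. Qed.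

Lemma dot3Dr a b c : dot3 a (b + c) = dot3 a b + dot3 a c.
Proof. by rewrite dot3C dot3Dl !(dot3C a). Qed.

Lemma dot3Zl t a b : dot3 (t *: a) b = t * dot3 a b.
Proof. by rewrite /dot3 mulr_sumr; apply: eq_bigr => i _; rewrite !mxE mulrA. Qed.

Lemma dot3Zr t a b : dot3 a (t *: b) = t * dot3 a b.
Proof. by rewrite dot3C dot3Zl dot3C. Qed.

Lemma dot30l b : dot3 0 b = 0.
Proof. by rewrite -(scale0r 0) dot3Zl mul0r. Qed.

Lemma dot30r a : dot3 a 0 = 0.
Proof. by rewrite dot3C dot30l. Qed.

Lemma dot3_mulmx (M : 'M[R]_3) a b : dot3 (M *m a) b = dot3 a (M^T *m b).
Proof.
rewrite /dot3 (eq_bigr (fun i => \sum_j M i j * a j ord0 * b i ord0)); last first.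
  by move=> i _; rewrite mxE mulr_suml.
rewrite exchange_big; apply: eq_bigr => j _; rewrite mxE mulr_sumr.
by apply: eq_bigr => i _; rewrite mxE; ring.
Qed.

Lemma sqr_le_dot3 a i : a i ord0 ^+ 2 <= dot3 a a.
Proof.
rewrite /dot3 (bigD1 i) //= -expr2 lerDl sumr_ge0 // => k _.
by rewrite -expr2 sqr_ge0.
Qed.

Lemma dot3_ge0 a : 0 <= dot3 a a.
Proof. exact: le_trans (sqr_ge0 _) (sqr_le_dot3 a c0). Qed.

Lemma dot3_eq0 a : dot3 a a = 0 -> a = 0.
Proof.
move=> aa0; apply/matrixP => i j; rewrite (ord1 j) mxE.
by apply/eqP; rewrite -sqrf_eq0 eq_le sqr_ge0 -aa0 sqr_le_dot3.
Qed.

Lemma dot3_delta j a : dot3 (delta_mx j ord0) a = a j ord0.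
Proof.
rewrite /dot3 (bigD1 j) //= mxE !eqxx mul1r big1 ?addr0 // => k kj.
by rewrite mxE (negPf kj) mul0r.
Qed.

Lemma cross3_linear a t u v :
  cross3 a (t *: u + v) = t *: cross3 a u + cross3 a v.
Proof.
apply/matrixP => i j; rewrite !mxE.
by case: ifP => _; [|case: ifP => _]; ring.
Qed.

Lemma cross3_0r a : cross3 a 0 = 0.
Proof. by apply/matrixP => i j; rewrite !mxE; case: ifP => _; [|case: ifP => _]; ring. Qed.

Lemma cross3_skew a b c : dot3 (cross3 a b) c + dot3 (cross3 a c) b = 0.
Proof. by rewrite /dot3 !sum3 !mxE /= !inordK //=; ring. Qed.

End Dot3.

Section PositiveDefinite.
Variables (R : realType) (C : 'M[R]_3) (al be : R).
Hypothesis al_gt0 : 0 < al.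
Hypothesis C_bnd : forall xi : 'cV[R]_3,
  al * dot3 xi xi <= dot3 (C *m xi) xi /\ dot3 (C *m xi) xi <= be * dot3 xi xi.

Implicit Types v : 'cV[R]_3.

Lemma pd_mulmx_eq0 v : C *m v = 0 -> v = 0.
Proof.
move=> Cv0; apply: dot3_eq0; have [+ _] := C_bnd v.
rewrite Cv0 dot30l pmulr_rle0 // => vv_le0.
by apply/eqP; rewrite eq_le vv_le0 dot3_ge0.
Qed.

Lemma pd_unitmx : C \in unitmx.
Proof.
rewrite unitmxE unitfE -det_tr; apply/negP => /det0P [v vn0 vC].
have /pd_mulmx_eq0 vT0 : C *m v^T = 0 by rewrite -[C]trmxK -trmx_mul vC trmx0.
by move: vn0; rewrite -[v]trmxK vT0 trmx0 eqxx.
Qed.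

Lemma mulmxKV_pd v : C *m (invmx C *m v) = v.
Proof. by rewrite mulKVmx ?pd_unitmx. Qed.

Lemma dot3_mulmx_ge0 v : 0 <= dot3 (C *m v) v.
Proof.
have [+ _] := C_bnd v; apply: le_trans.
by rewrite mulr_ge0 ?dot3_ge0 ?ltW.
Qed.

Lemma dot3_invmx_ge0 v : 0 <= dot3 (invmx C *m v) v.
Proof. by rewrite dot3C -{1}(mulmxKV_pd v) dot3_mulmx_ge0. Qed.

Lemma invmx_entry_le i j : `|invmx C i j| <= al^-1.
Proof.
pose e := invmx C *m delta_mx j (ord0 : 'I_1).
have eij : invmx C i j = e i ord0 by rewrite /e -colE mxE.
have [+ _] := C_bnd e; rewrite mulmxKV_pd dot3_delta => ee_le.
have ej_le : e j ord0 <= al^-1.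
  have [ej_le0|ej_gt0] := leP (e j ord0) 0.
    by rewrite (le_trans ej_le0) ?invr_ge0 ?ltW.
  rewrite -(ler_pM2l al_gt0) mulfV ?gt_eqF // -(ler_pM2r ej_gt0) mul1r -mulrA -expr2.
  by rewrite (le_trans _ ee_le) // ler_pM2l // sqr_le_dot3.
have ee : dot3 e e <= al^-1 ^+ 2.
  rewrite -(ler_pM2l al_gt0) expr2 mulrA mulfV ?gt_eqF // mul1r.
  exact: le_trans ee_le ej_le.
have := le_trans (sqr_le_dot3 e i) ee; have := invr_gt0 al.
rewrite eij al_gt0 ler_norml => ali_gt0 ei_le; apply/andP; split; nra.
Qed.

Hypothesis be_gt0 : 0 < be.
Hypothesis C_sym : C^T = C.

(* Expand [0 <= C w . w] at [w = v - be C^-1 v]. *)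
Lemma dot3_le_invmx v : dot3 v v <= be * dot3 (invmx C *m v) v.
Proof.
set e := invmx C *m v.
have Ce : C *m e = v := mulmxKV_pd v.
have Cve : dot3 (C *m v) e = dot3 v v by rewrite dot3_mulmx C_sym Ce.
have := dot3_mulmx_ge0 (v + (- be) *: e); have [_ Cvv] := C_bnd v.
rewrite mulmxDr -scalemxAr Ce !(dot3Dl, dot3Dr, dot3Zl, dot3Zr) Cve (dot3C v e).
move=> ge0; rewrite -subr_ge0 -(pmulr_rge0 _ be_gt0); nra.
Qed.

End PositiveDefinite.

Section MeasurableMatrix.
Variables (R : realType) (D : set R).

Lemma measurable_inv : measurable_fun [set: R] (@GRing.inv R).
Proof.
rewrite -(setUv [set 0]); apply/measurable_funU => //; first exact: measurableC.
split; first exact: measurable_fun_set1.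
apply: measurable_realfun.open_continuous_measurable_fun.
  by rewrite openC; apply: accessible_closed_set1; exact: hausdorff_accessible.
by move=> x /set_mem /eqP x0; exact: inv_continuous.
Qed.

Lemma measurable_det n (M : R -> 'M[R]_n) :
  (forall i j, measurable_fun D (fun x => M x i j)) ->
  measurable_fun D (fun x => \det (M x)).
Proof.
move=> mM; apply: measurable_sum => s.
apply: measurable_realfun.measurable_funM => //.
by apply: measurable_prod => i _; exact: mM.
Qed.

Lemma measurable_invmx n (M : R -> 'M[R]_n) :
  (forall i j, measurable_fun D (fun x => M x i j)) ->
  (forall x, D x -> M x \in unitmx) ->
  forall i j, measurable_fun D (fun x => invmx (M x) i j).
Proof.
move=> mM uM i j.
have mminor a b : measurable_fun D (fun x => \det (row' a (col' b (M x)))).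
  by apply: measurable_det => k l; under eq_fun do rewrite !mxE; exact: mM.
apply: (eq_measurable_fun (fun x => (\det (M x))^-1 * cofactor (M x) j i)).
  by move=> x /set_mem Dx; rewrite /invmx uM // !mxE.
apply: measurable_realfun.measurable_funM.
  exact: measurableT_comp measurable_inv (measurable_det mM).
exact: measurable_realfun.measurable_funM.
Qed.

Lemma bounded_measurable_mulmx m n (M : R -> 'M[R]_(m, n)) (F : R -> 'cV[R]_n) :
  (forall i j, bounded_measurable D (fun x => M x i j)) ->
  (forall j, bounded_measurable D (fun x => F x j ord0)) ->
  forall i, bounded_measurable D (fun x => (M x *m F x) i ord0).
Proof.
move=> bM bF i; under eq_fun do rewrite mxE.
by apply: bounded_measurable_sum => j; exact: bounded_measurableM.
Qed.

End MeasurableMatrix.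

Section PolyIntegral.
Variable R : realType.
Local Notation mu := (@lebesgue_measure R).
Implicit Types P S : {poly R}.

Lemma Rintegral_deriv_poly P a b : a < b ->
  \int[mu]_(x in `[a, b]) (P^`()).[x] = P.[b] - P.[a].
Proof.
move=> ab; rewrite /Rintegral (continuous_FTC2 ab (F := horner P)) //.
- by apply: continuous_subspaceT => x; exact: continuous_horner.
- split; first by move=> x _; exact: derivable_horner.
  + by apply: cvg_at_right_filter; exact: continuous_horner.
  + by apply: cvg_at_left_filter; exact: continuous_horner.
- by move=> x _; rewrite derivE.
Qed.

Definition primitive P : {poly R} :=
  \poly_(i < (size P).+1) (if i is j.+1 then P`_j / j.+1%:R else 0).

Lemma primitiveK P : (primitive P)^`() = P.
Proof.
apply/polyP => i; rewrite coef_deriv coef_poly ltnS.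
case: ltnP => iP; first by rewrite -[_ *+ i.+1]mulr_natr divfK ?pnatr_eq0.
by rewrite mul0rn nth_default.
Qed.

Lemma deriv_eq0_polyC P : P^`() = 0 -> P = (P`_0)%:P.
Proof.
move=> P'0; apply/polyP => -[|i]; rewrite coefC //=.
have /eqP := congr1 (fun Q : {poly R} => Q`_i) P'0.
by rewrite coef_deriv coef0 mulrn_eq0 /= => /eqP.
Qed.

Variable h : R.
Hypothesis h_gt0 : 0 < h.

(* The points [h / (k + 1)], [k < size P], are too many roots for [P]. *)
Lemma poly_itv_eq0 P : {in `[0, h], forall x, P.[x] = 0} -> P = 0.
Proof.
move=> P0; apply/eqP/negPn/negP => Pn0.
pose xs := [seq h / k.+1%:R | k <- iota 0 (size P)].
suff : (size xs < size P)%N by rewrite size_map size_iota ltnn.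
apply: (max_poly_roots Pn0).
  apply/allP => _ /mapP [k _ ->]; apply/rootP/P0.
  rewrite in_itv /= divr_ge0 ?ler0n ?(ltW h_gt0) //=.
  by rewrite ler_pdivrMr ?ltr0n // ler_peMr ?ler1n ?(ltW h_gt0).
rewrite map_inj_uniq ?iota_uniq // => m n /= /(mulfI (lt0r_neq0 h_gt0)).
by move/invr_inj/eqP; rewrite eqr_nat eqSS => /eqP.
Qed.

(* A primitive of [S] is nondecreasing on [0, h] and takes equal values at the
   ends, hence is constant there. *)
Lemma poly_integral_eq0 S : {in `[0, h], forall x, 0 <= S.[x]} ->
  \int[mu]_(x in `[0, h]) S.[x] = 0 -> S = 0.
Proof.
move=> S_ge0 intS0; set Q := primitive S.
have intS a b : 0 <= a -> a < b -> b <= h ->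
    Q.[b] - Q.[a] = \int[mu]_(x in `[a, b]) S.[x].
  by move=> *; rewrite -Rintegral_deriv_poly // primitiveK.
have Qh : Q.[h] = Q.[0] by apply/eqP; rewrite -subr_eq0 intS ?intS0 ?lexx.
have Q_ge t u : 0 <= t -> t <= u -> u <= h -> Q.[t] <= Q.[u].
  move=> t0; rewrite le_eqVlt => /predU1P [-> //|tu] uh.
  rewrite -subr_ge0 intS // Rintegral_ge0 // => x; rewrite /= in_itv /= => /andP[tx xu].
  by rewrite S_ge0 // in_itv /= (le_trans t0 tx) (le_trans xu uh).
have QC : Q - (Q.[0])%:P = 0.
  apply: poly_itv_eq0 => x; rewrite in_itv /= => /andP[x0 xh].
  apply/eqP; rewrite !hornerE subr_eq0 eq_le.
  by rewrite -{1}Qh Q_ge // Q_ge.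
by rewrite -(primitiveK S) -/Q -[Q](subrK (Q.[0])%:P) QC add0r derivC.
Qed.

End PolyIntegral.

Section PolyVec.
Variable R : realType.
Implicit Types (P Q : polyvec R) (a : R).

Definition dotp P Q : {poly R} := \sum_i P i ord0 * Q i ord0.

Lemma horner_dotp P Q x : dot3 (evalv P x) (evalv Q x) = (dotp P Q).[x].
Proof. by rewrite horner_sum; apply: eq_bigr => i _; rewrite !mxE hornerM. Qed.

Lemma deriv_dotp P Q : (dotp P Q)^`() = dotp (derivv P) Q + dotp P (derivv Q).
Proof. by rewrite /dotp !sum3 !mxE !derivD !derivM; ring. Qed.

Lemma evalvE P x i : evalv P x i ord0 = (P i ord0).[x].
Proof. by rewrite mxE. Qed.

Lemma evalv0 x : evalv (0 : polyvec R) x = 0.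
Proof. by apply/matrixP => i j; rewrite !mxE horner0. Qed.

Lemma evalvD P Q x : evalv (P + Q) x = evalv P x + evalv Q x.
Proof. by apply/matrixP => i j; rewrite !mxE hornerD. Qed.

Lemma evalvZ a P x : evalv (a%:P *: P) x = a *: evalv P x.
Proof. by apply/matrixP => i j; rewrite !mxE hornerCM. Qed.

Lemma derivv0 : derivv (0 : polyvec R) = 0.
Proof. by apply/matrixP => i j; rewrite !mxE deriv0. Qed.

Lemma derivvD P Q : derivv (P + Q) = derivv P + derivv Q.
Proof. by apply/matrixP => i j; rewrite !mxE derivD. Qed.

Lemma derivvZ a P : derivv (a%:P *: P) = a%:P *: derivv P.
Proof. by apply/matrixP => i j; rewrite !mxE deriv_mulC mul_polyC. Qed.

Variable p : nat.

Lemma in_Vp0 : in_Vp p (0 : polyvec R).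
Proof. by move=> i; rewrite mxE size_poly0. Qed.

Lemma in_Vp_derivv P : in_Vp p P -> in_Vp p (derivv P).
Proof.
move=> VP i; rewrite mxE; have [->|Pn0] := eqVneq (P i ord0) 0.
  by rewrite deriv0 size_poly0.
exact: leq_trans (ltnW (lt_size_deriv Pn0)) (VP i).
Qed.

End PolyVec.

Section Edge.
Variables (R : realType) (h : R).
Hypothesis h_gt0 : 0 < h.
Local Notation D := [set` `[0, h]].
Local Notation mu := (@lebesgue_measure R).
Local Notation ip := (ip_e h).
Local Notation ev := (@evalv R).
Implicit Types (F G : R -> 'cV[R]_3) (P Q : polyvec R) (S : {poly R}).

Let mD : measurable D. Proof. exact: measurable_itv. Qed.

Let finD : (mu D < +oo)%E.
Proof. by rewrite lebesgue_measure_itv /= lte_fin h_gt0 -EFinB ltry. Qed.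

Definition bounded_field F := forall i, bounded_measurable D (fun x => F x i ord0).

Definition dot_integrable F G :=
  mu.-integrable D (EFin \o (fun x => dot3 (F x) (G x))).

Lemma bounded_field_evalv P : bounded_field (ev P).
Proof.
move=> i; under [X in bounded_measurable _ X]eq_fun do rewrite evalvE.
apply: bounded_measurable_horner => //; exists h => x /=.
by rewrite in_itv /= => /andP[x_ge0 x_le]; rewrite ger0_norm.
Qed.

Lemma bounded_field_cross a F : bounded_field F ->
  bounded_field (fun x => cross3 a (F x)).
Proof.
move=> bF i; under [X in bounded_measurable _ X]eq_fun do rewrite mxE.
have bprod j k : bounded_measurable D (fun x => a j ord0 * F x k ord0).
  by apply: bounded_measurableM; [exact: bounded_measurable_cst | exact: bF].
have bterm j k :
    bounded_measurable D (fun x => a j ord0 * F x k ord0 - a k ord0 * F x j ord0).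
  exact: bounded_measurableD (bprod j k) (bounded_measurableN (bprod k j)).
by case: (nat_of_ord i == 0%N); [|case: (nat_of_ord i == 1%N)]; exact: bterm.
Qed.

Lemma dot_integrable_bounded F G :
  bounded_field F -> bounded_field G -> dot_integrable F G.
Proof.
move=> bF bG; apply: bounded_measurable_integrable => //.
by apply: bounded_measurable_sum => i; exact: bounded_measurableM.
Qed.

Lemma dot_integrable_sqr (f : R -> 'cV[R]_3) G :
  (forall i, measurable_fun D (fun x => f x i ord0) /\
     mu.-integrable D (fun x => ((f x i ord0) ^+ 2)%:E)) ->
  bounded_field G -> dot_integrable f G.
Proof.
move=> f_L2 bG.
have fG i : mu.-integrable D (EFin \o (fun x => f x i ord0 * G x i ord0)).
  by have [mf if2] := f_L2 i; exact: integrable_mul_bounded.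
have := @integrable_sum _ _ R mu D mD _ (index_enum 'I_3) xpredT _ (fun i _ => fG i).
by apply: eq_integrable => // x _; rewrite /= /dot3 sumEFin.
Qed.

Lemma dot_integrableC F G : dot_integrable F G -> dot_integrable G F.
Proof. by apply: eq_integrable => // x _; rewrite /= dot3C. Qed.

Lemma integrable_horner S : mu.-integrable D (EFin \o horner S).
Proof.
apply: bounded_measurable_integrable => //; apply: bounded_measurable_horner => //.
by exists h => x /=; rewrite in_itv /= => /andP[x_ge0 x_le]; rewrite ger0_norm.
Qed.

Lemma ipC F G : ip F G = ip G F.
Proof. by apply: eq_Rintegral => x _; rewrite dot3C. Qed.

Lemma ip0l F G : (forall x, F x = 0) -> ip F G = 0.
Proof.
move=> F0; rewrite /ip_e /Rintegral integral0_eq ?fine0 // => x _.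
by rewrite F0 dot30l.
Qed.

Lemma ip_evalv0r F : ip F (ev 0) = 0.
Proof. by rewrite ipC ip0l // => x; rewrite evalv0. Qed.

Lemma ip_mulmx_evalv0 (M : R -> 'M[R]_3) G : ip (fun x => M x *m ev 0 x) G = 0.
Proof. by apply: ip0l => x; rewrite evalv0 mulmx0. Qed.

Lemma ip_cross_evalv0 (b : 'cV[R]_3) G : ip (fun x => cross3 b (ev 0 x)) G = 0.
Proof. by apply: ip0l => x; rewrite evalv0 cross3_0r. Qed.

Lemma ip_linl a F F1 F2 G : (forall x, F x = a *: F1 x + F2 x) ->
  dot_integrable F1 G -> dot_integrable F2 G -> ip F G = a * ip F1 G + ip F2 G.
Proof.
move=> FE i1 i2; rewrite /ip_e -RintegralZl // -RintegralD //; last first.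
  apply: (@eq_integrable _ _ R mu D mD _ _ _ (@integrableZl _ _ R mu D mD a _ i1)).
  by move=> x _; rewrite /= EFinM.
by apply: eq_Rintegral => x _; rewrite FE dot3Dl dot3Zl.
Qed.

Lemma ip_linr a F G G1 G2 : (forall x, G x = a *: G1 x + G2 x) ->
  dot_integrable F G1 -> dot_integrable F G2 -> ip F G = a * ip F G1 + ip F G2.
Proof.
move=> GE i1 i2; rewrite ipC (ip_linl GE (dot_integrableC i1) (dot_integrableC i2)).
by rewrite (ipC G1) (ipC G2).
Qed.

Lemma ip_op_linl (Phi : R -> 'cV[R]_3 -> 'cV[R]_3) a P1 P2 G :
  (forall x t u v, Phi x (t *: u + v) = t *: Phi x u + Phi x v) ->
  (forall P, bounded_field (fun x => Phi x (ev P x))) -> bounded_field G ->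
  ip (fun x => Phi x (ev (a%:P *: P1 + P2) x)) G =
  a * ip (fun x => Phi x (ev P1 x)) G + ip (fun x => Phi x (ev P2 x)) G.
Proof.
move=> Phi_lin bPhi bG; apply: ip_linl; try exact: dot_integrable_bounded.
by move=> x; rewrite evalvD evalvZ Phi_lin.
Qed.

Lemma ip_evalv_linl a P1 P2 G : bounded_field G ->
  ip (ev (a%:P *: P1 + P2)) G = a * ip (ev P1) G + ip (ev P2) G.
Proof.
by move=> bG; apply: (ip_op_linl (Phi := fun _ v => v)) => // P; exact: bounded_field_evalv.
Qed.

Lemma ip_invmx_linl (C : R -> 'M[R]_3) a P1 P2 G :
  (forall P, bounded_field (fun x => invmx (C x) *m ev P x)) -> bounded_field G ->
  ip (fun x => invmx (C x) *m ev (a%:P *: P1 + P2) x) G =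
  a * ip (fun x => invmx (C x) *m ev P1 x) G + ip (fun x => invmx (C x) *m ev P2 x) G.
Proof.
apply: (ip_op_linl (Phi := fun x v => invmx (C x) *m v)) => x t u v.
by rewrite mulmxDr scalemxAr.
Qed.

Lemma ip_cross_linl (b : 'cV[R]_3) a P1 P2 G : bounded_field G ->
  ip (fun x => cross3 b (ev (a%:P *: P1 + P2) x)) G =
  a * ip (fun x => cross3 b (ev P1 x)) G + ip (fun x => cross3 b (ev P2 x)) G.
Proof.
move=> bG; apply: (ip_op_linl (Phi := fun _ => cross3 b)) => // [x|P].
  exact: cross3_linear.
exact/bounded_field_cross/bounded_field_evalv.
Qed.

Lemma ip_evalv_linr a F P1 P2 :
  dot_integrable F (ev P1) -> dot_integrable F (ev P2) ->
  ip F (ev (a%:P *: P1 + P2)) = a * ip F (ev P1) + ip F (ev P2).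
Proof. by apply: ip_linr => x; rewrite evalvD evalvZ. Qed.

Lemma bd_e_evalv_linl a P1 P2 G :
  bd_e h (ev (a%:P *: P1 + P2)) G = a * bd_e h (ev P1) G + bd_e h (ev P2) G.
Proof. by rewrite /bd_e !evalvD !evalvZ !dot3Dl !dot3Zl; ring. Qed.

Lemma bd_e_evalv_linr a F P1 P2 :
  bd_e h F (ev (a%:P *: P1 + P2)) = a * bd_e h F (ev P1) + bd_e h F (ev P2).
Proof. by rewrite /bd_e !evalvD !evalvZ !dot3Dr !dot3Zr; ring. Qed.

Lemma ip_cross_skew (b : 'cV[R]_3) F G : bounded_field F -> bounded_field G ->
  ip (fun x => cross3 b (F x)) G + ip (fun x => cross3 b (G x)) F = 0.
Proof.
move=> bF bG; rewrite /ip_e -RintegralD //; try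
  by apply: dot_integrable_bounded => //; exact: bounded_field_cross.
by rewrite /Rintegral integral0_eq ?fine0 // => x _; rewrite cross3_skew.
Qed.

Lemma ip_evalv P Q : ip (ev P) (ev Q) = \int[mu]_(x in D) (dotp P Q).[x].
Proof. by apply: eq_Rintegral => x _; rewrite horner_dotp. Qed.

Lemma ip_evalv_ibp P Q : ip (ev P) (ev (derivv Q)) + ip (ev (derivv P)) (ev Q) =
  dot3 (ev P h) (ev Q h) - dot3 (ev P 0) (ev Q 0).
Proof.
rewrite !ip_evalv -RintegralD ?integrable_horner //= !horner_dotp.
rewrite -(Rintegral_deriv_poly _ h_gt0); apply: eq_Rintegral => x _.
by rewrite deriv_dotp hornerD addrC.
Qed.

Lemma ip_evalv_eq0 P : ip (ev P) (ev P) = 0 -> P = 0.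
Proof.
rewrite ip_evalv => /poly_integral_eq0 -/(_ h_gt0) PP0.
have {PP0}PP0 x : dot3 (ev P x) (ev P x) = 0.
  by rewrite horner_dotp PP0 ?horner0 // => y _; rewrite -horner_dotp dot3_ge0.
apply/matrixP => i j; rewrite (ord1 j) mxE; apply: (poly_itv_eq0 h_gt0) => x _.
by have /dot3_eq0/matrixP/(_ i ord0) := PP0 x; rewrite !mxE.
Qed.

Section Compliance.
Variables (C : R -> 'M[R]_3) (al be : R).
Hypotheses (al_gt0 : 0 < al) (be_gt0 : 0 < be).
Hypothesis C_sym : forall x, x \in `[0, h] -> (C x)^T = C x.
Hypothesis C_bnd : forall x, x \in `[0, h] -> forall xi : 'cV[R]_3,
  al * dot3 xi xi <= dot3 (C x *m xi) xi /\ dot3 (C x *m xi) xi <= be * dot3 xi xi.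
Hypothesis C_meas : forall i j, measurable_fun `[0, h] (fun x => C x i j).

Lemma bounded_field_invmx F : bounded_field F ->
  bounded_field (fun x => invmx (C x) *m F x).
Proof.
move=> bF; apply: bounded_measurable_mulmx => // i j; split.
  by apply: measurable_invmx => // x Dx; exact: pd_unitmx al_gt0 (C_bnd Dx).
by exists al^-1 => x Dx; apply: (invmx_entry_le al_gt0 (C_bnd Dx)).
Qed.

Lemma ip_invmx_ge0 F : 0 <= ip (fun x => invmx (C x) *m F x) F.
Proof. by apply: Rintegral_ge0 => x Dx; apply: (dot3_invmx_ge0 al_gt0 (C_bnd Dx)). Qed.

Lemma ip_invmx_eq0 P : ip (fun x => invmx (C x) *m ev P x) (ev P) = 0 -> P = 0.
Proof.
move=> CP0; apply: ip_evalv_eq0; apply/eqP; rewrite eq_le.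
rewrite Rintegral_ge0 ?andbT => [|x _]; last exact: dot3_ge0.
have CPint : dot_integrable (fun x => invmx (C x) *m ev P x) (ev P).
  exact: dot_integrable_bounded (bounded_field_invmx (bounded_field_evalv P))
    (bounded_field_evalv P).
rewrite -(mulr0 be) -CP0 /ip_e -RintegralZl //.
apply: le_Rintegral => //.
  exact: dot_integrable_bounded (bounded_field_evalv P) (bounded_field_evalv P).
  have := @integrableZl _ _ R mu D mD be _ CPint.
  by apply: (@eq_integrable _ _ R mu D mD) => x _; rewrite /= EFinM.
by move=> x Dx; apply: (dot3_le_invmx al_gt0 (C_bnd Dx) be_gt0 (C_sym Dx)).
Qed.

End Compliance.

Variable p : nat.

(* Test with [Q = P']: integration by parts leaves [ip (ev P') (ev P') = 0]. *)
Lemma orth_derivv_eq0 P : in_Vp p P -> ev P 0 = 0 -> ev P h = 0 ->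
  (forall Q, in_Vp p Q -> ip (ev P) (ev (derivv Q)) = 0) -> P = 0.
Proof.
move=> VP P0 Ph orthP.
have := ip_evalv_ibp P (derivv P).
rewrite orthP; last exact: in_Vp_derivv.
rewrite P0 Ph !dot30l subrr add0r => /ip_evalv_eq0 P'0.
apply/matrixP => i j; rewrite (ord1 j) mxE.
have /deriv_eq0_polyC -> : (P i ord0)^`() = 0.
  by have /matrixP/(_ i ord0) := P'0; rewrite !mxE.
have /matrixP/(_ i ord0) := P0; rewrite !mxE horner_coef0 => ->.
exact: polyC0.
Qed.

End Edge.

Section BilinearSystem.
Variables (F : fieldType) (n : nat).
Implicit Types (x y : 'rV[F]_n) (a : F).

Lemma linear_row_sum (phi : 'rV[F]_n -> F) :
  (forall a x y, phi (a *: x + y) = a * phi x + phi y) ->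
  forall x, phi x = \sum_j x 0 j * phi 'e_j.
Proof.
move=> phi_lin x; have phi0 : phi 0 = 0.
  have /eqP := phi_lin 1 0 0; rewrite scaler0 addr0 mul1r.
  by rewrite -subr_eq0 opprD addrA subrr add0r oppr_eq0 => /eqP.
rewrite {1}(row_sum_delta x); elim: (index_enum _) => [|j r IH].
  by rewrite !big_nil.
by rewrite !big_cons phi_lin IH.
Qed.

Variables (B : 'rV[F]_n -> 'rV[F]_n -> F) (L : 'rV[F]_n -> F).
Hypothesis B_linl : forall a x1 x2 y, B (a *: x1 + x2) y = a * B x1 y + B x2 y.
Hypothesis B_linr : forall a x y1 y2, B x (a *: y1 + y2) = a * B x y1 + B x y2.
Hypothesis L_lin : forall a y1 y2, L (a *: y1 + y2) = a * L y1 + L y2.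
Hypothesis B_nondegenerate : forall x, (forall y, B x y = 0) -> x = 0.

Definition form_mx : 'M[F]_n := \matrix_(j, k) B 'e_j 'e_k.

Lemma form_mxE x y : B x y = \sum_k y 0 k * (x *m form_mx) 0 k.
Proof.
rewrite (linear_row_sum (B_linr ^~ x)); apply: eq_bigr => k _; congr (_ * _).
rewrite (linear_row_sum (fun a x1 x2 => B_linl a x1 x2 'e_k)) mxE.
by apply: eq_bigr => j _; rewrite mxE.
Qed.

Lemma form_mx_unit : form_mx \in unitmx.
Proof.
rewrite -row_free_unit; apply: inj_row_free => x xA0; apply: B_nondegenerate => y.
by rewrite form_mxE xA0 big1 // => k _; rewrite mxE mulr0.
Qed.

Lemma bilinear_solve : exists! x, forall y, B x y = L y.
Proof.
pose x := \row_k L 'e_k *m invmx form_mx.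
have x_sol y : B x y = L y.
  rewrite form_mxE mulmxKV ?form_mx_unit // (linear_row_sum L_lin).
  by apply: eq_bigr => k _; rewrite mxE.
exists x; split=> // x' x'_sol; apply/eqP; rewrite -subr_eq0 addrC -scaleN1r.
by apply/eqP/B_nondegenerate => y; rewrite B_linl x_sol x'_sol mulN1r addNr.
Qed.

End BilinearSystem.

Section Quadruples.
Variables (R : realType) (p : nat).
Local Notation quad := (polyvec R * polyvec R * polyvec R * polyvec R)%type.
Local Notation idx := ('I_3 * 'I_p.+1)%type.
Local Notation N := #|{: idx + idx + idx + idx}|.
Implicit Types (S T : quad) (a : R) (c : idx -> R).

Definition in_quad S : Prop :=
  let: (u, r, n, m) := S in [/\ in_Vp p u, in_Vp p r, in_Vp p n & in_Vp p m].

Definition quad_lin a S T : quad :=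
  (a%:P *: S.1.1.1 + T.1.1.1, a%:P *: S.1.1.2 + T.1.1.2,
   a%:P *: S.1.2 + T.1.2, a%:P *: S.2 + T.2).

Definition sum4 (f1 f2 f3 f4 : polyvec R -> R) T : R :=
  let: (t1, t2, t3, t4) := T in f1 t1 + f2 t2 + f3 t3 + f4 t4.

Definition polyvec_linear (phi : polyvec R -> R) :=
  forall a P Q, phi (a%:P *: P + Q) = a * phi P + phi Q.

Lemma sum4_linear f1 f2 f3 f4 : polyvec_linear f1 -> polyvec_linear f2 ->
    polyvec_linear f3 -> polyvec_linear f4 ->
  forall a T1 T2, sum4 f1 f2 f3 f4 (quad_lin a T1 T2) =
    a * sum4 f1 f2 f3 f4 T1 + sum4 f1 f2 f3 f4 T2.
Proof.
move=> l1 l2 l3 l4 a [[[? ?] ?] ?] [[[? ?] ?] ?].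
by rewrite /sum4 /= l1 l2 l3 l4; ring.
Qed.

Lemma sum4_eqP f1 f2 f3 f4 g1 g2 g3 g4 :
    f1 0 = g1 0 -> f2 0 = g2 0 -> f3 0 = g3 0 -> f4 0 = g4 0 ->
  (forall T, in_quad T -> sum4 f1 f2 f3 f4 T = sum4 g1 g2 g3 g4 T) <->
  (forall t, in_Vp p t -> [/\ f1 t = g1 t, f2 t = g2 t, f3 t = g3 t & f4 t = g4 t]).
Proof.
move=> e1 e2 e3 e4; split=> [fg t Vt | fg [[[t1 t2] t3] t4] [V1 V2 V3 V4]].
  have V0 : in_Vp p (0 : polyvec R) := in_Vp0 _ _.
  have /= := fg (t, 0, 0, 0) (And4 Vt V0 V0 V0).
  have /= := fg (0, t, 0, 0) (And4 V0 Vt V0 V0).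
  have /= := fg (0, 0, t, 0) (And4 V0 V0 Vt V0).
  have /= := fg (0, 0, 0, t) (And4 V0 V0 V0 Vt).
  rewrite e1 e2 e3 e4 => /addrI E4 /addIr/addrI E3 /addIr/addIr/addrI E2.
  by move=> /addIr/addIr/addIr E1; split.
rewrite /sum4; have [-> _ _ _] := fg _ V1; have [_ -> _ _] := fg _ V2.
by have [_ _ -> _] := fg _ V3; have [_ _ _ ->] := fg _ V4.
Qed.

Definition polyvec_of c : polyvec R := \col_i \poly_(d < p.+1) c (i, inord d).

Definition coords_of (P : polyvec R) (k : idx) : R := (P k.1 ord0)`_k.2.

Lemma in_Vp_polyvec_of c : in_Vp p (polyvec_of c).
Proof. by move=> i; rewrite mxE size_poly. Qed.

Lemma polyvec_ofK c : coords_of (polyvec_of c) =1 c.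
Proof. by case=> i d; rewrite /coords_of mxE coef_poly ltn_ord inord_val. Qed.

Lemma coords_ofK P : in_Vp p P -> polyvec_of (coords_of P) = P.
Proof.
move=> VP; apply/matrixP => i j; rewrite (ord1 j) mxE; apply/polyP => d.
rewrite coef_poly /coords_of /=; case: ltnP => dp; first by rewrite inordK.
by rewrite nth_default // (leq_trans (VP i)).
Qed.

Lemma polyvec_of_lin a c1 c2 :
  polyvec_of (fun k => a * c1 k + c2 k) = a%:P *: polyvec_of c1 + polyvec_of c2.
Proof.
apply/matrixP => i j; rewrite !mxE; apply/polyP => d.
by rewrite coefD coefCM !coef_poly; case: ltnP; rewrite ?mulr0 ?addr0.
Qed.

Definition quad_of (x : 'rV[R]_N) : quad :=
  let c k := x 0 (enum_rank k) in
  (polyvec_of (fun k => c (inl (inl (inl k)))),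
   polyvec_of (fun k => c (inl (inl (inr k)))),
   polyvec_of (fun k => c (inl (inr k))), polyvec_of (fun k => c (inr k))).

Definition coords_of_quad S : 'rV[R]_N :=
  let: (u, r, n, m) := S in
  \row_j match enum_val j with
         | inl (inl (inl k)) => coords_of u k | inl (inl (inr k)) => coords_of r k
         | inl (inr k) => coords_of n k | inr k => coords_of m k end.

Lemma in_quad_of x : in_quad (quad_of x).
Proof. by split; exact: in_Vp_polyvec_of. Qed.

Lemma quad_ofK S : in_quad S -> quad_of (coords_of_quad S) = S.
Proof.
case: S => [[[u r] n] m] [Vu Vr Vn Vm].
rewrite /quad_of /=; congr (_, _, _, _); rewrite -[RHS]coords_ofK //;
  by congr polyvec_of; apply/funext => k; rewrite mxE enum_rankK.
Qed.

Lemma coords_of_quadK x : coords_of_quad (quad_of x) = x.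
Proof.
apply/rowP => j; rewrite mxE.
by case E: (enum_val j) => [[[k|k]|k]|k]; rewrite polyvec_ofK -E enum_valK.
Qed.

Lemma quad_of_lin a x y : quad_of (a *: x + y) = quad_lin a (quad_of x) (quad_of y).
Proof.
by rewrite /quad_of /quad_lin /=; congr (_, _, _, _);
  rewrite -polyvec_of_lin; congr polyvec_of; apply/funext => k; rewrite !mxE.
Qed.

Lemma quad_of_eq0 x : quad_of x = (0, 0, 0, 0) -> x = 0.
Proof.
move=> x0; rewrite -[x]coords_of_quadK x0; apply/rowP => j; rewrite !mxE.
by case: (enum_val j) => [[[k|k]|k]|k]; rewrite /coords_of mxE coef0.
Qed.

Variables (B : quad -> quad -> R) (L : quad -> R).
Hypothesis B_linl : forall a S1 S2 T, B (quad_lin a S1 S2) T = a * B S1 T + B S2 T.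
Hypothesis B_linr : forall a S T1 T2, B S (quad_lin a T1 T2) = a * B S T1 + B S T2.
Hypothesis L_lin : forall a T1 T2, L (quad_lin a T1 T2) = a * L T1 + L T2.
Hypothesis B_nondegenerate :
  forall S, in_quad S -> (forall T, in_quad T -> B S T = 0) -> S = (0, 0, 0, 0).

Lemma quad_solve :
  exists! S, in_quad S /\ forall T, in_quad T -> B S T = L T.
Proof.
have [x [x_sol x_uniq]] :
    exists! x, forall y, B (quad_of x) (quad_of y) = L (quad_of y).
  apply: (bilinear_solve (L := L \o quad_of)) => [a x1 x2 y|a x y1 y2|a y1 y2|x Bx0].
  - by rewrite quad_of_lin B_linl.
  - by rewrite quad_of_lin B_linr.
  - by rewrite /= quad_of_lin L_lin.
  apply: quad_of_eq0; apply: B_nondegenerate (in_quad_of x) _ => T VT.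
  by rewrite -(quad_ofK VT) Bx0.
exists (quad_of x); split=> [|S [VS S_sol]].
  by split=> [|T VT]; [exact: in_quad_of | rewrite -(quad_ofK VT) x_sol].
rewrite -(quad_ofK VS) -(x_uniq (coords_of_quad S)) // => y.
by rewrite quad_ofK // S_sol //; exact: in_quad_of.
Qed.

End Quadruples.

Section EdgeSystem.
Variables (R : realType) (h : R).
Hypothesis h_gt0 : 0 < h.
Variable ie : 'cV[R]_3.
Variables (Cn Cm : R -> 'M[R]_3) (an bn am bm : R).
Hypotheses (an_gt0 : 0 < an) (bn_gt0 : 0 < bn) (am_gt0 : 0 < am) (bm_gt0 : 0 < bm).
Hypothesis Cn_sym : forall x, x \in `[0, h] -> (Cn x)^T = Cn x.
Hypothesis Cm_sym : forall x, x \in `[0, h] -> (Cm x)^T = Cm x.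
Hypothesis Cn_bnd : forall x, x \in `[0, h] -> forall xi : 'cV[R]_3,
  an * dot3 xi xi <= dot3 (Cn x *m xi) xi /\ dot3 (Cn x *m xi) xi <= bn * dot3 xi xi.
Hypothesis Cm_bnd : forall x, x \in `[0, h] -> forall xi : 'cV[R]_3,
  am * dot3 xi xi <= dot3 (Cm x *m xi) xi /\ dot3 (Cm x *m xi) xi <= bm * dot3 xi xi.
Hypothesis Cn_meas : forall i j, measurable_fun `[0, h] (fun x => Cn x i j).
Hypothesis Cm_meas : forall i j, measurable_fun `[0, h] (fun x => Cm x i j).
Variables (p : nat) (tau : R).
Hypothesis tau_gt0 : 0 < tau.
Variables (ubk ubl rbk rbl : 'cV[R]_3) (f g : R -> 'cV[R]_3).
Hypothesis f_L2 : forall i, measurable_fun `[0, h] (fun x => f x i ord0) /\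
  (lebesgue_measure : measure _ R).-integrable `[0, h] (fun x => ((f x i ord0) ^+ 2)%:E).
Hypothesis g_L2 : forall i, measurable_fun `[0, h] (fun x => g x i ord0) /\
  (lebesgue_measure : measure _ R).-integrable `[0, h] (fun x => ((g x i ord0) ^+ 2)%:E).

Local Notation quad := (polyvec R * polyvec R * polyvec R * polyvec R)%type.
Local Notation ip := (ip_e h).
Local Notation ev := (@evalv R).
Implicit Types (S T : quad) (P : polyvec R).

Definition bdnu (ak al : 'cV[R]_3) P := - dot3 ak (ev P 0) + dot3 al (ev P h).
Definition bdn (ak al : 'cV[R]_3) P := dot3 ak (ev P 0) + dot3 al (ev P h).

Definition force_law S pp := let: (u, r, n, m) := S in
  - ip (fun x => invmx (Cn x) *m ev n x) (ev pp) + ip (ev u) (ev (derivv pp))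
  - ip (fun x => cross3 ie (ev r x)) (ev pp).
Definition moment_law S qq := let: (u, r, n, m) := S in
  - ip (fun x => invmx (Cm x) *m ev m x) (ev qq) + ip (ev r) (ev (derivv qq)).
Definition force_balance S vv := let: (u, r, n, m) := S in
  ip (ev (derivv n)) (ev vv) + tau * bd_e h (ev u) (ev vv).
Definition moment_balance S ww := let: (u, r, n, m) := S in
  ip (fun x => cross3 ie (ev n x)) (ev ww) + ip (ev (derivv m)) (ev ww)
  + tau * bd_e h (ev r) (ev ww).

Definition force_load vv := ip f (ev vv) + tau * bdn ubk ubl vv.
Definition moment_load ww := ip g (ev ww) + tau * bdn rbk rbl ww.

Definition form S :=
  sum4 (force_law S) (moment_law S) (force_balance S) (moment_balance S).
Definition load := sum4 (bdnu ubk ubl) (bdnu rbk rbl) force_load moment_load.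

Let bounded_evalv := bounded_field_evalv h.
Let bounded_Cn P : bounded_field h (fun x => invmx (Cn x) *m ev P x).
Proof. exact: (bounded_field_invmx an_gt0 Cn_bnd Cn_meas (bounded_evalv P)). Qed.
Let bounded_Cm P : bounded_field h (fun x => invmx (Cm x) *m ev P x).
Proof. exact: (bounded_field_invmx am_gt0 Cm_bnd Cm_meas (bounded_evalv P)). Qed.
Let bounded_cross P : bounded_field h (fun x => cross3 ie (ev P x)).
Proof. exact: bounded_field_cross (bounded_evalv P). Qed.
Local Hint Resolve bounded_evalv bounded_Cn bounded_Cm bounded_cross : core.

Let integrable_ev P Q : dot_integrable h (ev P) (ev Q).
Proof. exact: dot_integrable_bounded. Qed.
Let integrable_Cn P Q : dot_integrable h (fun x => invmx (Cn x) *m ev P x) (ev Q).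
Proof. exact: dot_integrable_bounded. Qed.
Let integrable_Cm P Q : dot_integrable h (fun x => invmx (Cm x) *m ev P x) (ev Q).
Proof. exact: dot_integrable_bounded. Qed.
Let integrable_cross P Q : dot_integrable h (fun x => cross3 ie (ev P x)) (ev Q).
Proof. exact: dot_integrable_bounded. Qed.
Let integrable_f Q : dot_integrable h f (ev Q).
Proof. exact: dot_integrable_sqr. Qed.
Let integrable_g Q : dot_integrable h g (ev Q).
Proof. exact: dot_integrable_sqr. Qed.
Local Hint Resolve integrable_ev integrable_Cn integrable_Cm integrable_cross : core.
Local Hint Resolve integrable_f integrable_g : core.

(* [ring] compares atoms up to conversion, unfolding the integrands: abstract
   them first. *)
Ltac ring_ip := cbv beta;
  repeat match goal with |- context [ip_e ?h ?F ?G] => generalize (ip_e h F G) => ? end;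
  repeat match goal with |- context [bd_e ?h ?F ?G] => generalize (bd_e h F G) => ? end;
  ring.

Lemma laws_linl a S1 S2 : let S := quad_lin a S1 S2 in forall t,
  [/\ force_law S t = a * force_law S1 t + force_law S2 t,
       moment_law S t = a * moment_law S1 t + moment_law S2 t,
       force_balance S t = a * force_balance S1 t + force_balance S2 t &
       moment_balance S t = a * moment_balance S1 t + moment_balance S2 t].
Proof.
case: S1 S2 => [[[u1 r1] n1] m1] [[[u2 r2] n2] m2] /= t.
rewrite !derivvD !derivvZ !ip_evalv_linl // !ip_invmx_linl // !bd_e_evalv_linl.
rewrite (ip_cross_linl h_gt0 ie a r1 r2) // (ip_cross_linl h_gt0 ie a n1 n2) //.
by split; ring_ip.
Qed.

Lemma form_linl a S1 S2 T : form (quad_lin a S1 S2) T = a * form S1 T + form S2 T.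
Proof.
case: T => [[[pp qq] vv] ww]; rewrite /form /sum4.
have [-> _ _ _] := laws_linl a S1 S2 pp; have [_ -> _ _] := laws_linl a S1 S2 qq.
have [_ _ -> _] := laws_linl a S1 S2 vv; have [_ _ _ ->] := laws_linl a S1 S2 ww.
ring.
Qed.

Lemma laws_linear S : [/\ polyvec_linear (force_law S), polyvec_linear (moment_law S),
  polyvec_linear (force_balance S) & polyvec_linear (moment_balance S)].
Proof.
case: S => [[[u r] n] m]; split=> b P Q /=;
  rewrite ?derivvD ?derivvZ !ip_evalv_linr // ?bd_e_evalv_linr; ring_ip.
Qed.

Lemma loads_linear : [/\ polyvec_linear (bdnu ubk ubl), polyvec_linear (bdnu rbk rbl),
  polyvec_linear force_load & polyvec_linear moment_load].
Proof.
rewrite /force_load /moment_load /bdnu /bdn.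
by split=> b P Q; rewrite ?ip_evalv_linr // !evalvD !evalvZ !dot3Dr !dot3Zr; ring.
Qed.

Lemma form_linr a S T1 T2 : form S (quad_lin a T1 T2) = a * form S T1 + form S T2.
Proof. by have [l1 l2 l3 l4] := laws_linear S; exact: sum4_linear. Qed.

Lemma load_lin a T1 T2 : load (quad_lin a T1 T2) = a * load T1 + load T2.
Proof. by have [l1 l2 l3 l4] := loads_linear; exact: sum4_linear. Qed.

Lemma laws0 S : [/\ force_law S 0 = 0, moment_law S 0 = 0,
  force_balance S 0 = 0 & moment_balance S 0 = 0].
Proof.
case: S => [[[u r] n] m]; rewrite /= derivv0 !ip_evalv0r /bd_e !evalv0 !dot30r.
by split; ring.
Qed.

Lemma loads0 : [/\ bdnu ubk ubl 0 = 0, bdnu rbk rbl 0 = 0,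
  force_load 0 = 0 & moment_load 0 = 0].
Proof.
rewrite /bdnu /force_load /moment_load /bdn !ip_evalv0r !evalv0 !dot30r.
by split; ring.
Qed.

(* The coupling terms cancel: [ip] is symmetric and the cross product is skew. *)
Lemma energy_identity u r n m :
  force_law (u, r, n, m) n + moment_law (u, r, n, m) m
  - force_balance (u, r, n, m) u - moment_balance (u, r, n, m) r =
  - (ip (fun x => invmx (Cn x) *m ev n x) (ev n)
     + ip (fun x => invmx (Cm x) *m ev m x) (ev m)
     + tau * (bd_e h (ev u) (ev u) + bd_e h (ev r) (ev r))).
Proof.
move/eqP: (ip_cross_skew h_gt0 ie (bounded_evalv r) (bounded_evalv n)).
rewrite addr_eq0 => /eqP /= ->.
by rewrite (ipC h (ev u)) (ipC h (ev r)); ring_ip.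
Qed.

Lemma bd_e_ge0 F : 0 <= bd_e h F F.
Proof. by rewrite addr_ge0 ?dot3_ge0. Qed.

Lemma bd_e_eq0 P : bd_e h (ev P) (ev P) = 0 -> ev P 0 = 0 /\ ev P h = 0.
Proof.
move=> P0; have := dot3_ge0 (ev P 0); have := dot3_ge0 (ev P h).
by move: P0; rewrite /bd_e => P0 *; split; apply: dot3_eq0; lra.
Qed.

Lemma energy_eq0 u r n m :
  force_law (u, r, n, m) n = 0 -> moment_law (u, r, n, m) m = 0 ->
  force_balance (u, r, n, m) u = 0 -> moment_balance (u, r, n, m) r = 0 ->
  [/\ n = 0, m = 0, ev u 0 = 0 /\ ev u h = 0 & ev r 0 = 0 /\ ev r h = 0].
Proof.
move=> Fn Mm Bu Br; have := energy_identity u r n m.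
rewrite Fn Mm Bu Br !subr0 addr0 => /esym/eqP; rewrite oppr_eq0 => /eqP energy0.
have An := ip_invmx_ge0 an_gt0 Cn_bnd (ev n).
have Bm := ip_invmx_ge0 am_gt0 Cm_bnd (ev m).
have bu := bd_e_ge0 (ev u); have br := bd_e_ge0 (ev r).
have tb : 0 <= tau * (bd_e h (ev u) (ev u) + bd_e h (ev r) (ev r)).
  by apply: mulr_ge0; [exact: ltW | exact: addr_ge0].
have bd0 : bd_e h (ev u) (ev u) + bd_e h (ev r) (ev r) = 0.
  by apply/eqP; rewrite -(mulrI_eq0 _ (lregP (lt0r_neq0 tau_gt0))); apply/eqP; lra.
split; try by apply: bd_e_eq0; lra.
  by apply: (ip_invmx_eq0 h_gt0 an_gt0 bn_gt0 Cn_sym Cn_bnd Cn_meas); lra.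
by apply: (ip_invmx_eq0 h_gt0 am_gt0 bm_gt0 Cm_sym Cm_bnd Cm_meas); lra.
Qed.

Lemma form_nondegenerate S :
  in_quad p S -> (forall T, in_quad p T -> form S T = 0) -> S = (0, 0, 0, 0).
Proof.
case: S => [[[u r] n] m] [Vu Vr Vn Vm] form0.
have [l1 l2 l3 l4] := laws0 (u, r, n, m).
have /(sum4_eqP p l1 l2 l3 l4) laws : forall T, in_quad p T ->
    form (u, r, n, m) T = sum4 (fun=> 0) (fun=> 0) (fun=> 0) (fun=> 0) T.
  by move=> [[[? ?] ?] ?] VT; rewrite form0 // /sum4 !addr0.
have [Fn _ _ _] := laws n Vn; have [_ Mm _ _] := laws m Vm.
have [_ _ Bu _] := laws u Vu; have [_ _ _ Br] := laws r Vr.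
have [n0 m0 [u_0 u_h] [r_0 r_h]] := energy_eq0 Fn Mm Bu Br; subst n m.
have r0 : r = 0.
  apply: (orth_derivv_eq0 h_gt0 Vr r_0 r_h) => q Vq.
  by have [_ /= + _ _] := laws q Vq; rewrite ip_mulmx_evalv0 oppr0 add0r.
subst r; congr (_, _, _, _); apply: (orth_derivv_eq0 h_gt0 Vu u_0 u_h) => q Vq.
have [/= + _ _ _] := laws q Vq.
by rewrite ip_mulmx_evalv0 ip_cross_evalv0 oppr0 add0r addr0.
Qed.

Lemma form_load_eqP S :
  (forall T, in_quad p T -> form S T = load T) <->
  (forall t, in_Vp p t -> [/\ force_law S t = bdnu ubk ubl t,
    moment_law S t = bdnu rbk rbl t, force_balance S t = force_load t &
    moment_balance S t = moment_load t]).
Proof.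
have [l1 l2 l3 l4] := laws0 S; have [z1 z2 z3 z4] := loads0.
by apply: sum4_eqP; rewrite ?l1 ?l2 ?l3 ?l4 ?z1 ?z2 ?z3 ?z4.
Qed.

Lemma edge_system_solvable : exists! S : quad, let: (u, r, n, m) := S in
  [/\ in_Vp p u, in_Vp p r, in_Vp p n, in_Vp p m &
  forall pp qq vv ww, in_Vp p pp -> in_Vp p qq -> in_Vp p vv -> in_Vp p ww ->
  [/\ force_law (u, r, n, m) pp = bdnu ubk ubl pp,
      moment_law (u, r, n, m) qq = bdnu rbk rbl qq,
      force_balance (u, r, n, m) vv = force_load vv &
      moment_balance (u, r, n, m) ww = moment_load ww]].
Proof.
have [S [[VS /form_load_eqP S_sol] S_uniq]] :=
  quad_solve form_linl form_linr load_lin form_nondegenerate.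
exists S; split=> [|[[[u r] n] m] [Vu Vr Vn Vm sol]].
  case: S VS S_sol {S_uniq} => [[[u r] n] m] [Vu Vr Vn Vm] S_sol.
  split=> // pp qq vv ww Vpp Vqq Vvv Vww.
  have [-> _ _ _] := S_sol pp Vpp; have [_ -> _ _] := S_sol qq Vqq.
  by have [_ _ -> _] := S_sol vv Vvv; have [_ _ _ ->] := S_sol ww Vww.
apply: S_uniq; split=> //; apply/form_load_eqP => t Vt.
by have [] := sol t t t t Vt Vt Vt Vt.
Qed.

End EdgeSystem.

Lemma norm3_gt0 (R : realType) (a : 'cV[R]_3) : a != 0 -> 0 < norm3 a.
Proof.
move=> a_neq0; rewrite sqrtr_gt0 lt_def dot3_ge0 andbT.
by apply: contra a_neq0 => /eqP/dot3_eq0 ->.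
Qed.

Unset Implicit Arguments.

Theorem lemma3p4 (R : realType)
  (nk nl : 'cV[R]_3) (hkl : nk != nl)
  (Cn Cm : R -> 'M[R]_3) (an bn am bm : R)
  (han : 0 < an) (hbn : 0 < bn) (ham : 0 < am) (hbm : 0 < bm)
  (Cn_sym : forall x, x \in `[0, norm3 (nl - nk)] -> (Cn x)^T = Cn x)
  (Cm_sym : forall x, x \in `[0, norm3 (nl - nk)] -> (Cm x)^T = Cm x)
  (Cn_bnd : forall x, x \in `[0, norm3 (nl - nk)] -> forall xi : 'cV[R]_3,
      an * dot3 xi xi <= dot3 (Cn x *m xi) xi /\ dot3 (Cn x *m xi) xi <= bn * dot3 xi xi)
  (Cm_bnd : forall x, x \in `[0, norm3 (nl - nk)] -> forall xi : 'cV[R]_3,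
      am * dot3 xi xi <= dot3 (Cm x *m xi) xi /\ dot3 (Cm x *m xi) xi <= bm * dot3 xi xi)
  (Cn_meas : forall i j, measurable_fun `[0, norm3 (nl - nk)] (fun x => Cn x i j))
  (Cm_meas : forall i j, measurable_fun `[0, norm3 (nl - nk)] (fun x => Cm x i j))
  (p : nat) (tau : R) (htau : 0 < tau)
  (ubk ubl rbk rbl : 'cV[R]_3)
  (f g : R -> 'cV[R]_3)
  (f_L2 : forall i, measurable_fun `[0, norm3 (nl - nk)] (fun x => f x i ord0) /\
      (lebesgue_measure : measure _ R).-integrable `[0, norm3 (nl - nk)]
        (fun x => ((f x i ord0) ^+ 2)%:E))
  (g_L2 : forall i, measurable_fun `[0, norm3 (nl - nk)] (fun x => g x i ord0) /\
      (lebesgue_measure : measure _ R).-integrable `[0, norm3 (nl - nk)]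
        (fun x => ((g x i ord0) ^+ 2)%:E)) :
  let h := norm3 (nl - nk) in
  let ie := h^-1 *: (nl - nk) in
  (* <a_n, b nu_e>_e with nu_e(n_k) = -1 (x = 0), nu_e(n_l) = +1 (x = h) *)
  let bdnu (ak al : 'cV[R]_3) (B : polyvec R) :=
      - dot3 ak (evalv B 0) + dot3 al (evalv B h) in
  let bdn (ak al : 'cV[R]_3) (B : polyvec R) :=
      dot3 ak (evalv B 0) + dot3 al (evalv B h) in
  let ev (P : polyvec R) := evalv P in
  exists! (sol : polyvec R * polyvec R * polyvec R * polyvec R),
    let: (ue, re, ne, me) := sol in
    [/\ in_Vp p ue, in_Vp p re, in_Vp p ne, in_Vp p me &
    forall pp qq vv ww : polyvec R,
      in_Vp p pp -> in_Vp p qq -> in_Vp p vv -> in_Vp p ww ->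
      [/\ - ip_e h (fun x => invmx (Cn x) *m ev ne x) (ev pp)
            + ip_e h (ev ue) (ev (derivv pp))
            - ip_e h (fun x => cross3 ie (ev re x)) (ev pp)
          = bdnu ubk ubl pp,
          - ip_e h (fun x => invmx (Cm x) *m ev me x) (ev qq)
            + ip_e h (ev re) (ev (derivv qq))
          = bdnu rbk rbl qq,
          ip_e h (ev (derivv ne)) (ev vv) + tau * bd_e h (ev ue) (ev vv)
          = ip_e h f (ev vv) + tau * bdn ubk ubl vv &
          ip_e h (fun x => cross3 ie (ev ne x)) (ev ww)
            + ip_e h (ev (derivv me)) (ev ww) + tau * bd_e h (ev re) (ev ww)
          = ip_e h g (ev ww) + tau * bdn rbk rbl ww]].
Proof.
move=> h ie bdnu bdn ev.
have h_gt0 : 0 < h by apply: norm3_gt0; rewrite subr_eq0 eq_sym.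
exact: (edge_system_solvable h_gt0 ie han hbn ham hbm Cn_sym Cm_sym Cn_bnd Cm_bnd
  Cn_meas Cm_meas p htau ubk ubl rbk rbl f_L2 g_L2).
Qed.
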